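(* The function $\sqrt{1-\mathcal{F}_{GM}(\rho,\sigma)}$, where $\mathcal{F}_{GM}(\rho,\sigma)=\operatorname{tr}(\rho\sigma)/\sqrt{\operatorname{tr}(\rho^2)\operatorname{tr}(\sigma^2)}$, is a metric on the set of density matrices on a fixed finite-dimensional complex Hilbert space.
   Context: A density matrix is a positive semidefinite operator of unit trace. A metric is a function that is nonnegative, vanishes exactly on equal arguments, is symmetric, and satisfies the triangle inequality. *)

From HB Require Import structures.
From mathcomp Require Import all_boot all_order all_algebra.
From mathcomp Require Import complex.
From mathcomp Require Import reals.
From mathcomp Require Import spectral.
Set Implicit Arguments. Unset Strict Implicit. Unset Printing Implicit Defensive.
Import Order.TTheory GRing.Theory Num.Theory.
Local Open Scope ring_scope.
Local Open Scope complex_scope.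

Definition adjmx (R : realType) (n : nat) (A : 'M[R[i]]_n) : 'M[R[i]]_n :=
  (map_mx Num.conj A)^T.

Definition psd (R : realType) (n : nat) (A : 'M[R[i]]_n) : Prop :=
  adjmx A = A /\
  forall v : 'rV[R[i]]_n, 0 <= (v *m A *m (map_mx Num.conj v)^T) 0 0.

Definition density (R : realType) (n : nat) (A : 'M[R[i]]_n) : Prop :=
  psd A /\ \tr A = 1.

Definition F_GM (R : realType) (n : nat) (rho sigma : 'M[R[i]]_n) : R[i] :=
  \tr (rho *m sigma) / sqrtC (\tr (rho *m rho) * \tr (sigma *m sigma)).

Definition dGM (R : realType) (n : nat) (rho sigma : 'M[R[i]]_n) : R[i] :=
  sqrtC (1 - F_GM rho sigma).

Definition is_metric_on (T : Type) (K : numDomainType) (S : T -> Prop) (d : T -> T -> K) : Prop :=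
  (forall x y, S x -> S y -> 0 <= d x y) /\
  (forall x y, S x -> S y -> (d x y = 0 <-> x = y)) /\
  (forall x y, S x -> S y -> d x y = d y x) /\
  (forall x y z, S x -> S y -> S z -> d x z <= d x y + d y z).

(* Normalise each density matrix in the Hilbert-Schmidt norm, rho^ = rho / ||rho||.
   For Hermitian matrices tr(rho sigma) is the Hilbert-Schmidt inner product <rho, sigma>,
   and it is real because tr(rho sigma) = tr(sigma rho); hence
   F_GM(rho, sigma) = <rho^, sigma^> and 1 - F_GM(rho, sigma) = ||rho^ - sigma^||^2 / 2.
   So sqrt(1 - F_GM) is the Hilbert-Schmidt distance of the normalised matrices divided by
   sqrt 2, which satisfies the triangle inequality of a norm; it separates density matrices
   because rho is recovered from rho^ and tr rho = 1. *)
From mathcomp Require Import all_boot all_order all_algebra.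
From mathcomp Require Import complex reals sesquilinear spectral.
From mathcomp Require Import ring.
Set Implicit Arguments. Unset Strict Implicit. Unset Printing Implicit Defensive.
Import Order.TTheory GRing.Theory Num.Theory.
Local Open Scope ring_scope.

Section HilbertSchmidt.
Variable C : numClosedFieldType.

Definition hsdot m n (A B : 'M[C]_(m, n)) : C := dotmx (mxvec A) (mxvec B).

Definition hsnorm m n (A : 'M[C]_(m, n)) : C := sqrtC (hsdot A A).

Definition hsnormalize m n (A : 'M[C]_(m, n)) : 'M[C]_(m, n) := (hsnorm A)^-1 *: A.

Lemma mxtrace_mul_conjT m n (A B : 'M[C]_(m, n)) :
  \tr (A *m (map_mx Num.conj B)^T) = hsdot A B.
Proof.
rewrite /hsdot dotmxE mxE (reindex _ (curry_mxvec_bij _ _)) /=.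
rewrite /mxtrace (eq_bigr (fun i => \sum_j A i j * (B i j)^*)); last first.
  by move=> i _; rewrite mxE; apply: eq_bigr => j _; rewrite !mxE.
rewrite pair_bigA; apply: eq_bigr => -[i j] _.
by rewrite !mxE !mxvecE.
Qed.

Lemma mxtrace_mul_herm n (A B : 'M[C]_n) :
  (map_mx Num.conj B)^T = B -> \tr (A *m B) = hsdot A B.
Proof. by move=> hB; rewrite -mxtrace_mul_conjT hB. Qed.

Lemma hsdotC m n (A B : 'M[C]_(m, n)) : hsdot B A = (hsdot A B)^*.
Proof. by rewrite /hsdot hermC /= mul1r. Qed.

Lemma hsnorm_ge0 m n (A : 'M[C]_(m, n)) : 0 <= hsnorm A.
Proof. exact: sqrt_dnorm_ge0. Qed.

Lemma hsnorm_eq0 m n (A : 'M[C]_(m, n)) : (hsnorm A == 0) = (A == 0).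
Proof. by rewrite sqrt_dnorm_eq0 mxvec_eq0. Qed.

Lemma sqr_hsnorm m n (A : 'M[C]_(m, n)) : hsnorm A ^+ 2 = hsdot A A.
Proof. exact: sqrtCK. Qed.

Lemma hsnormD m n (A B : 'M[C]_(m, n)) : hsnorm (A + B) <= hsnorm A + hsnorm B.
Proof. by rewrite /hsnorm /hsdot linearD; exact: triangle_lerif. Qed.

Lemma hsdot_normalize m n (A B : 'M[C]_(m, n)) :
  hsdot (hsnormalize A) (hsnormalize B) = hsdot A B / (hsnorm A * hsnorm B).
Proof.
rewrite /hsdot /hsnormalize !linearZ /=.
rewrite linearZl_LR linearZr_LR /= geC0_conj ?invr_ge0 ?hsnorm_ge0 //.
by rewrite mulrA mulrC invfM.
Qed.

Lemma hsnormalizeK m n (A : 'M[C]_(m, n)) : hsnorm A *: hsnormalize A = A.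
Proof.
have [->|A0] := eqVneq A 0; first by rewrite /hsnormalize !scaler0.
by rewrite scalerA mulfV ?scale1r ?hsnorm_eq0.
Qed.

Lemma hsnormalize_inj n (A B : 'M[C]_n) :
  \tr A = \tr B -> \tr A != 0 -> hsnormalize A = hsnormalize B -> A = B.
Proof.
move=> trAB trA0 eqAB.
have /invr_inj eq_norm : (hsnorm A)^-1 = (hsnorm B)^-1.
  by apply: (mulIf trA0); rewrite {2}trAB -!mxtraceZ -/(hsnormalize A) eqAB.
by rewrite -(hsnormalizeK A) -(hsnormalizeK B) eqAB eq_norm.
Qed.

Lemma sqr_hsnorm_normalizeB m n (A B : 'M[C]_(m, n)) :
  A != 0 -> B != 0 -> hsdot B A = hsdot A B ->
  hsnorm (hsnormalize A - hsnormalize B) ^+ 2 =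
    2 * (1 - hsdot (hsnormalize A) (hsnormalize B)).
Proof.
move=> A0 B0 hBA.
have normalized_unit (X : 'M[C]_(m, n)) :
    X != 0 -> hsdot (hsnormalize X) (hsnormalize X) = 1.
  by move=> X0; rewrite hsdot_normalize -sqr_hsnorm divff // mulf_neq0 ?hsnorm_eq0.
rewrite sqr_hsnorm /hsdot linearB /= dnormB /= -!/(hsdot _ _) !normalized_unit //.
by rewrite -hsdotC !hsdot_normalize hBA [hsnorm B * _]mulrC; ring.
Qed.

End HilbertSchmidt.

Section Fidelity.
Variables (R : realType) (n : nat).
Implicit Types A B : 'M[R[i]]_n.

Lemma F_GMC A B : F_GM A B = F_GM B A.
Proof. by rewrite /F_GM mxtrace_mulC [\tr (A *m A) * _]mulrC. Qed.

Lemma F_GM_hsdot A B : adjmx A = A -> adjmx B = B ->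
  F_GM A B = hsdot (hsnormalize A) (hsnormalize B).
Proof.
move=> hA hB; rewrite hsdot_normalize /F_GM.
rewrite !mxtrace_mul_herm // sqrtCM ?nnegrE -?sqr_hsnorm ?exprn_ge0 ?hsnorm_ge0 //.
by rewrite !sqrCK ?hsnorm_ge0.
Qed.

Lemma dGM_hsnorm A B : adjmx A = A -> adjmx B = B -> A != 0 -> B != 0 ->
  dGM A B = sqrtC 2^-1 * hsnorm (hsnormalize A - hsnormalize B).
Proof.
move=> hA hB A0 B0.
have hBA : hsdot B A = hsdot A B by rewrite -!mxtrace_mul_herm // mxtrace_mulC.
rewrite /dGM; have -> : 1 - F_GM A B = 2^-1 * hsnorm (hsnormalize A - hsnormalize B) ^+ 2.
  by rewrite sqr_hsnorm_normalizeB // mulrA mulVf ?pnatr_eq0 // mul1r F_GM_hsdot.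
by rewrite sqrtCM ?nnegrE ?invr_ge0 ?ler0n ?exprn_ge0 ?hsnorm_ge0 // sqrCK ?hsnorm_ge0.
Qed.

Lemma dGM_density A B : density A -> density B ->
  dGM A B = sqrtC 2^-1 * hsnorm (hsnormalize A - hsnormalize B).
Proof.
have density_neq0 X : density X -> X != 0.
  by case=> _ trX; apply: contra_eq_neq trX => ->; rewrite mxtrace0 eq_sym oner_neq0.
move=> hA hB; apply: dGM_hsnorm; rewrite ?density_neq0 //.
- by case: hA => -[].
- by case: hB => -[].
Qed.

End Fidelity.

Theorem theorem11 (R : realType) (n : nat) :
  is_metric_on (@density R n) (@dGM R n).
Proof.
have sqrt_half_gt0 : 0 < sqrtC (2^-1 : R[i]) by rewrite sqrtC_gt0 invr_gt0 ltr0n.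
split; [|split; [|split]].
- move=> A B hA hB; rewrite dGM_density //.
  by rewrite mulr_ge0 ?hsnorm_ge0 ?ltW.
- move=> A B hA hB; rewrite dGM_density //; split => [/eqP|->].
    rewrite mulf_eq0 gt_eqF //= hsnorm_eq0 subr_eq0 => /eqP.
    by case: hA hB => _ trA [_ trB]; apply: hsnormalize_inj; rewrite ?trA ?trB ?oner_neq0.
  by apply/eqP; rewrite subrr mulf_eq0 hsnorm_eq0 eqxx orbT.
- by move=> A B _ _; rewrite /dGM F_GMC.
- move=> A B D hA hB hD; rewrite !dGM_density // -mulrDr.
  apply: ler_wpM2l; first exact: ltW.
  have -> : hsnormalize A - hsnormalize D =
            (hsnormalize A - hsnormalize B) + (hsnormalize B - hsnormalize D).
    by rewrite addrA subrK.
  exact: hsnormD.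
Qed.
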